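(* Let $A$ and $B$ be rings, $f: A\to B$ a ring homomorphism and $J$ a proper ideal of $B$ such that $J$ is semicommutative. If $A$ is a weak Armendariz ring, then $A\bowtie^{f}J$ is a weak Armendariz ring.
   Context: All rings are associative with identity (not necessarily commutative), ring homomorphisms are unital, and ideals are two-sided. $\mathrm{nil}(R)$ denotes the set of nilpotent elements of a ring $R$. For a ring homomorphism $f:A\to B$ and an ideal $J$ of $B$, the amalgamation is the subring $A\bowtie^{f}J=\{(a,f(a)+j)\mid a\in A,\ j\in J\}$ of $A\times B$. A ring $R$ (possibly without identity, e.g. an ideal regarded as a ring) is semicommutative if for all $a,b\in R$, $ab=0$ implies $aRb=0$. A ring $R$ is weak Armendariz if whenever $p(x)=\sum_{i=0}^n a_ix^i$ and $q(x)=\sum_{j=0}^m b_jx^j$ in $R[x]$ satisfy $p(x)q(x)=0$, then $a_ib_j\in\mathrm{nil}(R)$ for all $i,j$. *)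

From HB Require Import structures.
From mathcomp Require Import all_boot all_order all_algebra.
From mathcomp Require Import ring_quotient.
Set Implicit Arguments. Unset Strict Implicit. Unset Printing Implicit Defensive.
Import GRing.Theory.
Local Open Scope ring_scope.

Definition nilpotentr (R : nzRingType) (x : R) : Prop := exists n : nat, x ^+ n = 0.

(* weak Armendariz ring: p q = 0 in R[x] implies a_i b_j nilpotent for all i, j
   (coefficients of index >= size are 0, hence trivially nilpotent). *)
Definition weak_armendariz (R : nzRingType) : Prop :=
  forall p q : {poly R}, p * q = 0 -> forall i j : nat, nilpotentr (p`_i * q`_j).

(* semicommutative subset (ideal regarded as a ring without identity) *)
Definition semicommutative_on (R : nzRingType) (J : {pred R}) : Prop :=
  forall a b, a \in J -> b \in J -> a * b = 0 -> forall r, r \in J -> a * r * b = 0.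

(* Two-sided proper ideals: MathComp's [idealr] (additive subgroup, closed under
   left multiplication, 1 \notin J) plus closure under right multiplication. *)
HB.mixin Record isRightIdealClosed (R : nzRingType) (S : R -> bool) := {
  rideal_closed_subproof : forall a, {in S, forall u, u * a \in S}
}.

#[short(type="twoSidedProperIdeal")]
HB.structure Definition TwoSidedProperIdeal (R : nzRingType) :=
  {S of Idealr R S & isRightIdealClosed R S}.

Section Amalgamation.
Variables (A B : nzRingType) (f : {rmorphism A -> B}) (J : twoSidedProperIdeal B).

Definition amalg_pred : {pred A * B} := [pred x : A * B | x.2 - f x.1 \in J].

Lemma amalg_subring_closed : subring_closed amalg_pred.
Proof.
have J0 : (0 : B) \in J by exact: rpred0.
have lJ : forall a u, u \in J -> a * u \in J.
  by move=> a u uJ; case: (@proper_ideal_subproof B J) => _ /(_ a u uJ).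
have rJ : forall a u, u \in J -> u * a \in J.
  by move=> a u uJ; exact: rideal_closed_subproof.
split.
- by rewrite inE /= rmorph1 subrr.
- move=> [x1 x2] [y1 y2]; move=> hx hy; rewrite !inE /= in hx hy *.
  rewrite rmorphB.
  have -> : x2 - y2 - (f x1 - f y1) = (x2 - f x1) - (y2 - f y1).
    by rewrite !opprB addrACA [RHS]addrACA (addrC (- y2)).
  by rewrite rpredB.
- move=> [x1 x2] [y1 y2]; move=> hx hy; rewrite !inE /= in hx hy *.
  rewrite rmorphM.
  have -> : x2 * y2 - f x1 * f y1
          = (x2 - f x1) * y2 + f x1 * (y2 - f y1).
    by rewrite mulrBl mulrBr addrA addrNK.
  by apply: rpredD; [apply: rJ | apply: lJ].
Qed.

HB.instance Definition _ :=
  GRing.isSubringClosed.Build (A * B)%type amalg_pred amalg_subring_closed.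

Record amalgamation := Amalg { amalg_val : A * B; _ : amalg_val \in amalg_pred }.

HB.instance Definition _ := [isSub for amalg_val].
HB.instance Definition _ := [Choice of amalgamation by <:].
HB.instance Definition _ := [SubChoice_isSubNzRing of amalgamation by <:].

End Amalgamation.

(* A product p q = 0 over the amalgamation vanishes in both coordinates. In the
   first coordinate the weak Armendariz property of A makes a_i b_j nilpotent, so
   some power u^n of the second coordinate u of a_i b_j lies in J. Sandwiching
   the second-coordinate product between the constants u^n gives two polynomials
   with coefficients in J and product 0. A semicommutative ring without identity
   is weak Armendariz, because its nilpotent elements are closed under sums and
   multiplication; hence u^(2n+1) and so u are nilpotent, and an element of the
   amalgamation with both coordinates nilpotent is nilpotent. *)

From HB Require Import structures.
From mathcomp Require Import all_boot all_order all_algebra.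
From mathcomp Require Import ring_quotient.
From mathcomp Require Import zify.

Set Implicit Arguments.
Unset Strict Implicit.
Unset Printing Implicit Defensive.

Local Open Scope ring_scope.
Import GRing.Theory.

Section Nilpotent.
Variable R : nzRingType.
Implicit Types x y : R.

Lemma nilpotentr_exp x n : nilpotentr (x ^+ n) -> nilpotentr x.
Proof. by case=> m xnm; exists (n * m)%N; rewrite exprM. Qed.

Lemma nilpotentrN x : nilpotentr x -> nilpotentr (- x).
Proof. by case=> n xn; exists n; rewrite exprNn xn mulr0. Qed.

Lemma nilpotentr_mulC x y : nilpotentr (x * y) -> nilpotentr (y * x).
Proof.
have yxS n : (y * x) ^+ n.+1 = y * (x * y) ^+ n * x.
  elim: n => [|n IH]; first by rewrite expr1 expr0 mulr1.
  by rewrite exprS IH exprS !mulrA.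
by case=> n xyn; exists n.+1; rewrite yxS xyn mulr0 mul0r.
Qed.

End Nilpotent.

Section Semicommutative.
Variables (R : nzRingType) (S : zmodClosed R).
Hypothesis mulS : {in S &, forall x y, x * y \in S}.
Hypothesis scS : semicommutative_on S.
Implicit Types x y : R.

Let S1 : pred R := [pred x | (x \in S) || (x == 1)].

Let S1_S x : x \in S -> x \in S1.
Proof. by rewrite inE => ->. Qed.

Let S1_1 : 1 \in S1.
Proof. by rewrite inE eqxx orbT. Qed.

Let S1M x y : x \in S1 -> y \in S1 -> x * y \in S1.
Proof.
rewrite !inE => /orP[xS|/eqP->] /orP[yS|/eqP->]; rewrite ?mul1r ?mulr1 ?xS ?yS //.
by rewrite mulS.
Qed.

Let S1X x n : x \in S1 -> x ^+ n \in S1.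
Proof. by move=> xS1; elim: n => [|n IH]; rewrite ?expr0 // exprS S1M. Qed.

Let S1_semicommutative u v r :
  u \in S1 -> v \in S1 -> r \in S1 -> u * v = 0 -> u * r * v = 0.
Proof.
rewrite !inE => /orP[uS|/eqP->] /orP[vS|/eqP->] /orP[rS|/eqP->] uv;
  rewrite ?mulr1 ?mul1r in uv *; rewrite ?uv ?mulr0 ?mul0r //; first exact: scS.
by move/eqP: uv; rewrite oner_eq0.
Qed.

Section Generator.
Variable a : R.
Hypothesis Sa : a \in S.

Fixpoint word k w : Prop :=
  if k is k'.+1 then exists w' r, [/\ word k' w', r \in S1 & w = w' * r * a]
  else w = 1.

(* [wordspan k] is the additive span of the products r_1 a r_2 a ... r_k a s with
   r_i, s in S1, i.e. the k-th power of the ideal generated by a in S with 1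
   adjoined. By semicommutativity a^k = 0 kills all these products, so this
   ideal is nilpotent as soon as a is. *)
Inductive wordspan k : R -> Prop :=
| wordspan0 : wordspan k 0
| wordspanD x y : wordspan k x -> wordspan k y -> wordspan k (x + y)
| wordspan_word w s : word k w -> s \in S1 -> wordspan k (w * s).

Lemma word_S1 k w : word k w -> w \in S1.
Proof.
elim: k w => [|k IH] w /=; first by move->; apply: S1_1.
by case=> w' [r [/IH w'S1 rS1 ->]]; apply: S1M; [apply: S1M | apply: S1_S].
Qed.

Lemma word1 y : y \in S1 -> word 1 (y * a).
Proof. by move=> yS1; exists 1, y; rewrite mul1r. Qed.

Lemma word_mul_eq0 k w c : word k w -> c \in S1 -> a ^+ k * c = 0 -> w * c = 0.
Proof.
elim: k w c => [|k IH] w c /=; first by move=> -> _; rewrite expr0 !mul1r.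
case=> w' [r [w'k rS1 ->]] cS1 akc.
have aS1 : a * c \in S1 by apply: S1M; first apply: S1_S.
have w'ac : w' * (a * c) = 0 by apply: IH; rewrite // mulrA -exprSr.
by rewrite -mulrA S1_semicommutative // (word_S1 w'k).
Qed.

Lemma wordspan_eq0 m x : a ^+ m = 0 -> wordspan m x -> x = 0.
Proof.
move=> am; elim=> [|x' y' _ -> _ ->|w s wm sS1]; rewrite ?addr0 //.
by apply: word_mul_eq0 wm sS1 _; rewrite am mul0r.
Qed.

Lemma wordspanMr k x z : wordspan k x -> z \in S1 -> wordspan k (x * z).
Proof.
move=> xk zS1; elim: xk => [|x' y' _ IHx _ IHy|w s wk sS1].
- by rewrite mul0r; apply: wordspan0.
- by rewrite mulrDl; apply: wordspanD.
- by rewrite -mulrA; apply: wordspan_word; last apply: S1M.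
Qed.

Lemma wordspanM k x z : wordspan k x -> wordspan 1 z -> wordspan k.+1 (x * z).
Proof.
move=> xk; elim: xk z => [|x' y' _ IHx _ IHy|w s wk sS1] z z1.
- by rewrite mul0r; apply: wordspan0.
- by rewrite mulrDl; apply: wordspanD; [apply: IHx | apply: IHy].
elim: z1 => [|x2 y2 _ IHx _ IHy|w1 s1 [_ [r [-> rS1 ->]]] s1S1].
- by rewrite mulr0; apply: wordspan0.
- by rewrite mulrDr; apply: wordspanD.
rewrite mul1r !mulrA -(mulrA w); apply: wordspan_word => //.
by exists w, (s * r); split=> //; apply: S1M.
Qed.

Lemma wordspanX m z : wordspan 1 z -> wordspan m (z ^+ m).
Proof.
move=> z1; elim: m => [|m IH]; last by rewrite exprSr; apply: wordspanM.
by rewrite expr0 -[1]mulr1; apply: wordspan_word; [|apply: S1_1].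
Qed.

Lemma wordspan1_mull y : y \in S1 -> wordspan 1 (y * a).
Proof.
by move=> yS1; rewrite -[y * a]mulr1; apply: wordspan_word; [exact: word1 | exact: S1_1].
Qed.

Lemma wordspan1_mulr y : y \in S1 -> wordspan 1 (a * y).
Proof.
by move=> yS1; rewrite -[a]mul1r; apply: wordspan_word; first exact: word1.
Qed.

Lemma wordspan1_expD b k : b \in S -> wordspan 1 ((a + b) ^+ k - b ^+ k).
Proof.
move=> Sb; elim: k => [|k IH]; first by rewrite subrr; apply: wordspan0.
have -> : (a + b) ^+ k.+1 - b ^+ k.+1
        = ((a + b) ^+ k - b ^+ k) * (a + b) + b ^+ k * a.
  by rewrite !exprSr mulrBl [b ^+ k * (a + b)]mulrDr opprD addrA addrAC addrNK.
apply: wordspanD; first by apply: wordspanMr; last by apply: S1_S; rewrite rpredD.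
by apply: wordspan1_mull; apply: S1X; apply: S1_S.
Qed.

Lemma nilpotentr_wordspan1 z : nilpotentr a -> wordspan 1 z -> nilpotentr z.
Proof. by case=> m am z1; exists m; apply: wordspan_eq0 am _; apply: wordspanX. Qed.

End Generator.

Lemma nilpotentrD x y :
  x \in S -> y \in S -> nilpotentr x -> nilpotentr y -> nilpotentr (x + y).
Proof.
move=> Sx Sy [n xn] ynil; apply: (@nilpotentr_exp _ _ n).
apply: (nilpotentr_wordspan1 Sy ynil); rewrite addrC -[_ ^+ n]subr0 -xn.
exact: (@wordspan1_expD y Sy x n Sx).
Qed.

Lemma nilpotentr_mull x y : x \in S -> y \in S -> nilpotentr x -> nilpotentr (y * x).
Proof.
by move=> Sx Sy xnil; apply: (nilpotentr_wordspan1 Sx xnil); apply/wordspan1_mull/S1_S.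
Qed.

Lemma nilpotentr_mulr x y : x \in S -> y \in S -> nilpotentr x -> nilpotentr (x * y).
Proof.
by move=> Sx Sy xnil; apply: (nilpotentr_wordspan1 Sx xnil); apply/wordspan1_mulr/S1_S.
Qed.

Lemma nilpotentr_mul_mid x r y :
  x \in S -> r \in S -> y \in S -> nilpotentr (x * y) -> nilpotentr (x * r * y).
Proof.
move=> Sx Sr Sy /nilpotentr_mulC yxnil; apply: nilpotentr_mulC.
by rewrite mulrA; apply: nilpotentr_mulr; rewrite ?mulS.
Qed.

Lemma nilpotentr_sum (I : Type) (s : seq I) (P : pred I) (F : I -> R) :
  (forall i, P i -> F i \in S /\ nilpotentr (F i)) ->
  nilpotentr (\sum_(i <- s | P i) F i).
Proof.
move=> FS; apply: (@proj2 (_ \in S)).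
apply: (big_ind (fun x => x \in S /\ nilpotentr x)) => //.
- by split; [exact: rpred0 | exists 1%N; rewrite expr1].
- by move=> x y [Sx xnil] [Sy ynil]; split; [exact: rpredD | exact: nilpotentrD].
Qed.

Lemma poly_mul_eq0_coef_nilpotent (P Q : {poly R}) :
  (forall i, P`_i \in S) -> (forall j, Q`_j \in S) -> P * Q = 0 ->
  forall i j, nilpotentr (P`_i * Q`_j).
Proof.
move=> PS QS PQ i j; move: {2}(i + j)%N (erefl (i + j)%N) => k.
elim/ltn_ind: k i j => k IH i j ijk.
have PQS h l : P`_h * Q`_l \in S by exact: mulS.
have ik : (i < k.+1)%N by lia.
have {j ijk} -> : j = (k - i)%N by lia.
have /eqP : \sum_(h < k.+1) P`_h * Q`_(k - h) = 0 by rewrite -coefM PQ coef0.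
rewrite (bigD1 (Ordinal ik)) //= addr_eq0 => /eqP PQik.
(* Multiply the coefficient identity of X^k by P_i Q_(k-i): each term becomes
   P_i (Q_(k-i) P_h) Q_(k-h), nilpotent by induction on the total degree. *)
apply: (@nilpotentr_exp _ _ 2); rewrite expr2 {2}PQik mulrN mulr_sumr.
apply/nilpotentrN/nilpotentr_sum => -[h hk] /=; rewrite -val_eqE /= => hi.
split; first by rewrite mulS.
rewrite mulrA -(mulrA P`_i).
case: (ltngtP h i) hi => // [hi|ih] _.
- apply: nilpotentr_mulr; rewrite ?mulS //.
  apply: nilpotentr_mull; rewrite ?mulS //.
  by apply/nilpotentr_mulC/(IH (h + (k - i))%N) => //; lia.
- apply: nilpotentr_mul_mid; rewrite ?mulS //.
  by apply: (IH (i + (k - h))%N) => //; lia.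
Qed.

End Semicommutative.

Section SemicommutativeIdeal.
Variables (B : nzRingType) (J : twoSidedProperIdeal B).
Hypothesis scJ : semicommutative_on J.

Lemma idealMl a u : u \in J -> u * a \in J.
Proof. exact: rideal_closed_subproof. Qed.

Lemma poly_mul_eq0_coef_nilpotent_mod (P Q : {poly B}) i j n :
  P * Q = 0 -> (P`_i * Q`_j) ^+ n \in J -> nilpotentr (P`_i * Q`_j).
Proof.
move=> PQ; set u := _ * _; set s := u ^+ n => Js.
have mulJ : {in J &, forall x y, x * y \in J} by move=> x y _; apply: idealMr.
have sPQs : s%:P * P * (Q * s%:P) = 0 by rewrite mulrA -(mulrA _ P) PQ mulr0 mul0r.
have : nilpotentr ((s%:P * P)`_i * (Q * s%:P)`_j).
  apply: (poly_mul_eq0_coef_nilpotent mulJ scJ _ _ sPQs) => k.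
  - by rewrite coefCM; apply: idealMl.
  - by rewrite coefMC; apply: idealMr.
have -> : (s%:P * P)`_i * (Q * s%:P)`_j = u ^+ (n + n).+1.
  by rewrite coefCM coefMC mulrA -(mulrA s) -/u -exprSr -exprD addSn.
exact: nilpotentr_exp.
Qed.

End SemicommutativeIdeal.

Section Amalgamation.
Variables (A B : nzRingType) (f : {rmorphism A -> B}) (J : twoSidedProperIdeal B).
Local Notation R := (amalgamation f J).

Definition amalg_fst : {rmorphism R -> A} := fst \o val.
Definition amalg_snd : {rmorphism R -> B} := snd \o val.

Lemma amalg_sndB_fst x : amalg_snd x - f (amalg_fst x) \in J.
Proof. exact: valP x. Qed.

Lemma amalg_snd_mem_ideal x : amalg_fst x = 0 -> amalg_snd x \in J.
Proof. by move=> x1; have := amalg_sndB_fst x; rewrite x1 rmorph0 subr0. Qed.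

Lemma amalg_nilpotent x :
  nilpotentr (amalg_fst x) -> nilpotentr (amalg_snd x) -> nilpotentr x.
Proof.
move=> [n x1n] [m x2m]; exists (n + m)%N.
have x1nm : amalg_fst (x ^+ (n + m)) = 0 by rewrite rmorphXn exprD x1n mul0r.
have x2nm : amalg_snd (x ^+ (n + m)) = 0 by rewrite rmorphXn exprD x2m mulr0.
by apply: val_inj; rewrite [val _]surjective_pairing; congr pair.
Qed.

End Amalgamation.

Theorem theorem4p1 (A B : nzRingType) (f : {rmorphism A -> B})
    (J : twoSidedProperIdeal B) :
  semicommutative_on J ->
  weak_armendariz A ->
  weak_armendariz (amalgamation f J).
Proof.
move=> scJ wA p q pq i j.
have [n fst_n] : nilpotentr (amalg_fst f J (p`_i * q`_j)).
  by rewrite rmorphM -!coef_map; apply: wA; rewrite -rmorphM pq rmorph0.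
apply: amalg_nilpotent; first by exists n.
rewrite rmorphM -!coef_map; apply: (poly_mul_eq0_coef_nilpotent_mod scJ (n := n)).
  by rewrite -rmorphM pq rmorph0.
by rewrite !coef_map -rmorphM -rmorphXn amalg_snd_mem_ideal // rmorphXn.
Qed.
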